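(* For every $(\alpha,\beta,L,M)\in(0,+\infty)^3\times\mathbb{R}$, $$\frac12\Bigl(\frac{9\alpha^2\beta M^2}{2}\Bigr)^{1/3}L-2\cdot6^{2/3}\alpha\le\mu(\alpha,\beta,L,M)\le\mu^*(\alpha,\beta,L,M)\le\frac12\Bigl(\frac{9\alpha^2\beta M^2}{2}\Bigr)^{1/3}L+\frac{3\alpha}{2}.$$
   Context: $S((0,L))$ is the space of step functions with finitely many jumps on $(0,L)$: functions $u=c+\sum_{s\in S_u}J(s)\mathbf{1}_{[s,L)}$ with finite jump set $S_u\subset(0,L)$ and nonzero jumps; $u(0),u(L)$ denote the values near the endpoints. For $u\in S((0,L))$, $\mathcal{G}(\alpha,\beta,f,(0,L),u)=\alpha\,\#(S_u\cap(0,L))+\beta\int_0^L(u(x)-f(x))^2dx$. Then $\mu(\alpha,\beta,L,M)=\min\{\mathcal{G}(\alpha,\beta,Mx,(0,L),u):u\in S((0,L))\}$ and $\mu^*(\alpha,\beta,L,M)=\min\{\mathcal{G}(\alpha,\beta,Mx,(0,L),u):u\in S((0,L)),u(0)=0,u(L)=ML\}$, where $Mx$ denotes the function $x\mapsto Mx$. *)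

From Stdlib Require Import Reals Lra List.
From Coquelicot Require Import Coquelicot.
Import ListNotations.
Open Scope R_scope.

(* A step function on (0,L) with finitely many jumps is encoded by a constant
   c and a list of (jump position s, jump size J(s)):
     u = c + sum_{(s,J) in js} J * 1_{[s,L)}.
   Well-formedness: positions are pairwise distinct, lie in (0,L), and jumps
   are nonzero; then the jump set S_u is exactly map fst js. *)
Definition step_ok (L : R) (js : list (R * R)) : Prop :=
  NoDup (map fst js) /\
  List.Forall (fun p => 0 < fst p < L /\ snd p <> 0) js.

Definition step_eval (c : R) (js : list (R * R)) (x : R) : R :=
  c + fold_right (fun p acc => (if Rle_dec (fst p) x then snd p else 0) + acc) 0 js.

(* value near 0 is c; value near L is c + sum of all jumps *)
Definition step_left (c : R) (js : list (R * R)) : R := c.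
Definition step_right (c : R) (js : list (R * R)) : R :=
  c + fold_right (fun p acc => snd p + acc) 0 js.

Definition G (alpha beta : R) (f : R -> R) (L : R) (c : R) (js : list (R * R)) : R :=
  alpha * INR (length js) + beta * RInt (fun x => (step_eval c js x - f x) ^ 2) 0 L.

(* mu and mu^*: the (attained) minimum, formalized as the greatest lower bound
   of the set of values of G over admissible step functions. *)
Definition mu (alpha beta L M : R) : R :=
  real (Glb_Rbar (fun y => exists c js, step_ok L js /\
                    y = G alpha beta (fun x => M * x) L c js)).

Definition mu_star (alpha beta L M : R) : R :=
  real (Glb_Rbar (fun y => exists c js, step_ok L js /\
                    step_left c js = 0 /\ step_right c js = M * L /\
                    y = G alpha beta (fun x => M * x) L c js)).

Definition cbrt (x : R) : R := if Rle_dec x 0 then 0 else Rpower x (1/3).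

From Stdlib Require Import Reals Lra Lia List.
From Coquelicot Require Import Coquelicot.
Import ListNotations.
Open Scope R_scope.

(* Lower bound: on a jump-free piece of length d, the best constant fit of
   M x costs M^2 d^3 / 12 >= M^2 (3 t^2 d - 2 t^3) / 12 (tangent at t >= 0).
   Summing over the k + 1 pieces cut by k jumps, the fidelity term is at least
   beta M^2 t^2 L / 4 - beta M^2 t^3 (k + 1) / 6, and for the scale t with
   beta M^2 t^3 = 6 alpha the k-dependence cancels against alpha k.
   Upper bound: the staircase of n ~ L / t equal steps, jumping by M h at the
   midpoint of each cell of length h = L / n, costs alpha n + beta M^2 L^3 / (12 n^2). *)
Lemma is_RInt_affine_sq (c M a b : R) :
  is_RInt (fun x => (c - M * x) ^ 2) a b
    ((b - a) * (c - M * (a + b) / 2) ^ 2 + M ^ 2 * (b - a) ^ 3 / 12).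
Proof.
  set (F x := c ^ 2 * x - c * M * x ^ 2 + M ^ 2 * x ^ 3 / 3).
  replace (_ + _) with (minus (F b) (F a))
    by (unfold minus, plus, opp, F; simpl; field).
  apply (is_RInt_derive (V := R_CompleteNormedModule) F).
  - intros x _. unfold F. auto_derive; [exact I | field].
  - intros x _. apply (ex_derive_continuous (K := R_AbsRing) (V := R_NormedModule)).
    auto_derive. exact I.
Qed.

Lemma is_RInt_ext_open (f g : R -> R) (a b I : R) : a <= b ->
  (forall x, a < x < b -> f x = g x) -> is_RInt f a b I -> is_RInt g a b I.
Proof.
  intros Hab Hfg. apply is_RInt_ext.
  rewrite Rmin_left, Rmax_right by exact Hab. exact Hfg.
Qed.

Lemma cube_ge_tangent (d t : R) : 0 <= d -> 0 <= t -> 3 * t ^ 2 * d - 2 * t ^ 3 <= d ^ 3.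
Proof.
  intros Hd Ht.
  assert (0 <= (d - t) ^ 2 * (d + 2 * t)) by (apply Rmult_le_pos; [apply pow2_ge_0 | lra]).
  nra.
Qed.

Definition jump_count (a b : R) (js : list (R * R)) : nat :=
  length (filter (fun p => if Rlt_dec a (fst p) then
                             if Rlt_dec (fst p) b then true else false
                           else false) js).

Lemma jump_count_le_length a b js : (jump_count a b js <= length js)%nat.
Proof. apply filter_length_le. Qed.

Lemma jump_count_cons_ge a b p js : (jump_count a b js <= jump_count a b (p :: js))%nat.
Proof. unfold jump_count; simpl. destruct Rlt_dec; [destruct Rlt_dec|]; simpl; lia. Qed.

Lemma jump_count_cons_split a b s J js : a < s < b ->
  (jump_count a s js + jump_count s b js + 1 <= jump_count a b ((s, J) :: js))%nat.
Proof.
  intros Hs. unfold jump_count; simpl.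
  destruct Rlt_dec; [destruct Rlt_dec|]; try lra. simpl.
  induction js as [|q rest IH]; simpl; [lia|].
  repeat destruct Rlt_dec; simpl; lra || lia.
Qed.

Lemma step_eval_cons c p js x :
  step_eval c (p :: js) x = step_eval (c + if Rle_dec (fst p) x then snd p else 0) js x.
Proof. unfold step_eval; simpl. ring. Qed.

Lemma step_eval_cons_outside c s J js a b : ~ (a < s < b) ->
  exists c', forall x, a < x < b -> step_eval c ((s, J) :: js) x = step_eval c' js x.
Proof.
  intros Hs. destruct (Rle_dec s a) as [Hsa | Hsa].
  - exists (c + J). intros x Hx. rewrite step_eval_cons; simpl.
    destruct Rle_dec; [reflexivity | lra].
  - exists c. intros x Hx. rewrite step_eval_cons; simpl.
    destruct Rle_dec; [lra | now rewrite Rplus_0_r].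
Qed.

Lemma is_RInt_step_deviation_ge (M t : R) js : 0 <= t -> forall c a b, a <= b ->
  exists I, is_RInt (fun x => (step_eval c js x - M * x) ^ 2) a b I /\
    M ^ 2 / 12 * (3 * t ^ 2 * (b - a) - 2 * t ^ 3 * (INR (jump_count a b js) + 1)) <= I.
Proof.
  intros Ht. assert (HMt : 0 <= M ^ 2 / 12 * t ^ 3)
    by (apply Rmult_le_pos; [apply Rmult_le_pos; [apply pow2_ge_0 | lra] | now apply pow_le]).
  induction js as [|[s J] r IH]; intros c a b Hab.
  - eexists. split.
    + apply (is_RInt_ext_open (fun x => (c - M * x) ^ 2)); [exact Hab | |apply is_RInt_affine_sq].
      intros x _. unfold step_eval; simpl. ring.
    + pose proof (cube_ge_tangent (b - a) t ltac:(lra) Ht).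
      assert (0 <= (b - a) * (c - M * (a + b) / 2) ^ 2)
        by (apply Rmult_le_pos; [lra | apply pow2_ge_0]).
      simpl jump_count; simpl INR.
      assert (0 <= M ^ 2) by apply pow2_ge_0. nra.
  - assert (Hs : a < s < b \/ ~ (a < s < b))
      by (destruct (Rlt_dec a s), (Rlt_dec s b); [left | right..]; lra).
    destruct Hs as [Hs | Hs].
    + destruct (IH c a s ltac:(lra)) as [I1 [HI1 HB1]].
      destruct (IH (c + J) s b ltac:(lra)) as [I2 [HI2 HB2]].
      exists (I1 + I2). split.
      * change (I1 + I2) with (plus I1 I2).
        apply (is_RInt_Chasles (V := R_NormedModule) _ a s b).
        -- eapply is_RInt_ext_open; [lra | | exact HI1].
           intros x Hx. rewrite step_eval_cons; simpl.
           destruct Rle_dec; [lra | now rewrite Rplus_0_r].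
        -- eapply is_RInt_ext_open; [lra | | exact HI2].
           intros x Hx. rewrite step_eval_cons; simpl.
           destruct Rle_dec; [reflexivity | lra].
      * pose proof (le_INR _ _ (jump_count_cons_split a b s J r ltac:(lra))) as Hc.
        rewrite !plus_INR in Hc. simpl INR in Hc. nra.
    + destruct (step_eval_cons_outside c s J r a b Hs) as [c' Hc'].
      destruct (IH c' a b Hab) as [I [HI HB]].
      exists I. split.
      * eapply is_RInt_ext_open; [exact Hab | | exact HI].
        intros x Hx. now rewrite Hc'.
      * pose proof (le_INR _ _ (jump_count_cons_ge a b (s, J) r)). nra.
Qed.

Lemma G_ge_tangent (alpha beta L M t c : R) js :
  0 <= alpha -> 0 <= beta -> 0 <= L -> 0 <= t -> beta * M ^ 2 * t ^ 3 <= 6 * alpha ->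
  beta * M ^ 2 * t ^ 2 * L / 4 - beta * M ^ 2 * t ^ 3 / 6
    <= G alpha beta (fun x => M * x) L c js.
Proof.
  intros Ha Hb HL Ht Hscale.
  destruct (is_RInt_step_deviation_ge M t js Ht c 0 L HL) as [I [HI HB]].
  unfold G. rewrite (is_RInt_unique _ _ _ _ HI).
  pose proof (le_INR _ _ (jump_count_le_length 0 L js)) as Hcount.
  set (k := INR (jump_count 0 L js)) in *.
  assert (0 <= k) by apply pos_INR.
  assert (beta * (M ^ 2 / 12 * (3 * t ^ 2 * (L - 0) - 2 * t ^ 3 * (k + 1))) <= beta * I)
    by (apply Rmult_le_compat_l; lra).
  assert ((6 * alpha - beta * M ^ 2 * t ^ 3) * k >= 0) by nra.
  nra.
Qed.

Lemma cbrt_pos x : 0 < x -> 0 < cbrt x.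
Proof. intros Hx. unfold cbrt. destruct Rle_dec; [lra | apply exp_pos]. Qed.

Lemma cbrt_cube_r x : 0 < x -> cbrt x ^ 3 = x.
Proof.
  intros Hx. unfold cbrt. destruct Rle_dec as [H | _]; [lra|].
  rewrite <- (Rpower_pow 3) by apply exp_pos.
  rewrite Rpower_mult. replace (1 / 3 * INR 3) with 1 by (simpl; field).
  now apply Rpower_1.
Qed.

Lemma cbrt_cube_l y : 0 < y -> cbrt (y ^ 3) = y.
Proof.
  intros Hy. unfold cbrt. destruct Rle_dec as [H | _]; [pose proof (pow_lt _ 3 Hy); lra|].
  rewrite <- (Rpower_pow 3) by exact Hy.
  rewrite Rpower_mult. replace (INR 3 * (1 / 3)) with 1 by (simpl; field).
  now apply Rpower_1.
Qed.

Lemma cbrt_0 : cbrt 0 = 0.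
Proof. unfold cbrt. destruct Rle_dec; lra. Qed.

Lemma optimal_spacing alpha beta M : 0 < alpha -> 0 < beta -> M <> 0 ->
  exists t, 0 < t /\ beta * M ^ 2 * t ^ 3 = 6 * alpha /\
    cbrt (9 * alpha ^ 2 * beta * M ^ 2 / 2) = beta * M ^ 2 * t ^ 2 / 2.
Proof.
  intros Ha Hb HM.
  assert (HbM : 0 < beta * M ^ 2) by (apply Rmult_lt_0_compat; [lra | now apply pow2_gt_0]).
  set (t := cbrt (6 * alpha / (beta * M ^ 2))).
  assert (Ht : 0 < t) by (apply cbrt_pos, Rdiv_lt_0_compat; lra).
  assert (Hscale : beta * M ^ 2 * t ^ 3 = 6 * alpha).
  { unfold t. rewrite cbrt_cube_r by (apply Rdiv_lt_0_compat; lra). field. lra. }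
  exists t. split; [exact Ht | split; [exact Hscale |]].
  rewrite <- cbrt_cube_l by (apply Rmult_lt_0_compat; [apply Rmult_lt_0_compat|]; nra).
  f_equal. replace (9 * alpha ^ 2 * beta * M ^ 2 / 2)
    with ((6 * alpha) ^ 2 * (beta * M ^ 2) / 8) by field.
  rewrite <- Hscale. field.
Qed.

Lemma G_ge_energy (alpha beta L M c : R) js : 0 < alpha -> 0 < beta -> 0 <= L ->
  / 2 * cbrt (9 * alpha ^ 2 * beta * M ^ 2 / 2) * L - alpha
    <= G alpha beta (fun x => M * x) L c js.
Proof.
  intros Ha Hb HL. destruct (Req_dec M 0) as [-> | HM].
  - replace (9 * alpha ^ 2 * beta * 0 ^ 2 / 2) with 0 by field. rewrite cbrt_0.
    pose proof (G_ge_tangent alpha beta L 0 0 c js ltac:(lra) ltac:(lra) HL (Rle_refl 0)).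
    nra.
  - destruct (optimal_spacing alpha beta M Ha Hb HM) as [t [Ht [Hscale ->]]].
    pose proof (G_ge_tangent alpha beta L M t c js ltac:(lra) ltac:(lra) HL ltac:(lra)).
    nra.
Qed.

Fixpoint staircase (h M : R) (n : nat) (a : R) : list (R * R) :=
  match n with
  | O => []
  | S n' => (a + h / 2, M * h) :: staircase h M n' (a + h)
  end.

Lemma staircase_length h M n a : length (staircase h M n a) = n.
Proof. revert a; induction n as [|n IH]; intros a; simpl; auto. Qed.

Lemma staircase_jump_sum h M n a :
  fold_right (fun p acc => snd p + acc) 0 (staircase h M n a) = INR n * (M * h).
Proof.
  revert a; induction n as [|n IH]; intros a; [simpl; ring|].
  cbn [staircase fold_right snd]. rewrite IH, S_INR. ring.
Qed.

Lemma In_staircase h M n a p : 0 < h -> In p (staircase h M n a) ->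
  a < fst p < a + INR n * h /\ snd p = M * h.
Proof.
  intros Hh. revert a; induction n as [|n IH]; intros a Hp; simpl in Hp; [contradiction|].
  rewrite S_INR. pose proof (pos_INR n).
  destruct Hp as [<- | Hp].
  - simpl. split; [split|]; nra.
  - destruct (IH (a + h) Hp) as [[H1 H2] H3]. split; [split|]; auto; lra.
Qed.

Lemma staircase_NoDup h M n a : 0 < h -> NoDup (map fst (staircase h M n a)).
Proof.
  intros Hh. revert a; induction n as [|n IH]; intros a; simpl; constructor; auto.
  intros Hin. apply in_map_iff in Hin. destruct Hin as [p [Hp Hin]].
  destruct (In_staircase h M n (a + h) p Hh Hin) as [[H1 _] _]. lra.
Qed.

Lemma step_eval_before_jumps c js x : (forall p, In p js -> x < fst p) ->
  step_eval c js x = c.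
Proof.
  intros Hjs. induction js as [|p r IH]; [unfold step_eval; simpl; ring|].
  rewrite step_eval_cons. destruct Rle_dec as [Hle | _].
  - specialize (Hjs p (or_introl eq_refl)). lra.
  - rewrite Rplus_0_r. apply IH. intros q Hq. apply Hjs. now right.
Qed.

Lemma is_RInt_midpoint_jump (f : R -> R) M a h : 0 < h ->
  (forall x, a < x < a + h / 2 -> f x = M * a) ->
  (forall x, a + h / 2 < x < a + h -> f x = M * (a + h)) ->
  is_RInt (fun x => (f x - M * x) ^ 2) a (a + h) (M ^ 2 * h ^ 3 / 12).
Proof.
  intros Hh Hleft Hright.
  replace (M ^ 2 * h ^ 3 / 12)
    with (plus ((a + h / 2 - a) * (M * a - M * (a + (a + h / 2)) / 2) ^ 2
                + M ^ 2 * (a + h / 2 - a) ^ 3 / 12)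
               ((a + h - (a + h / 2)) * (M * (a + h) - M * (a + h / 2 + (a + h)) / 2) ^ 2
                + M ^ 2 * (a + h - (a + h / 2)) ^ 3 / 12))
    by (unfold plus; simpl; field).
  apply (is_RInt_Chasles (V := R_NormedModule) _ a (a + h / 2)).
  - eapply is_RInt_ext_open; [lra | | apply is_RInt_affine_sq].
    intros x Hx. now rewrite Hleft.
  - eapply is_RInt_ext_open; [lra | | apply is_RInt_affine_sq].
    intros x Hx. now rewrite Hright.
Qed.

Lemma is_RInt_staircase h M n a : 0 < h ->
  is_RInt (fun x => (step_eval (M * a) (staircase h M n a) x - M * x) ^ 2)
    a (a + INR n * h) (INR n * M ^ 2 * h ^ 3 / 12).
Proof.
  intros Hh. revert a; induction n as [|n IH]; intros a.
  - simpl INR. replace (a + 0 * h) with a by ring.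
    replace (0 * M ^ 2 * h ^ 3 / 12) with (@zero R_NormedModule) by (unfold zero; simpl; field).
    apply is_RInt_point.
  - pose proof (pos_INR n).
    assert (Hlater : forall x, x < a + h -> forall p, In p (staircase h M n (a + h)) -> x < fst p).
    { intros x Hx p Hp. destruct (In_staircase h M n (a + h) p Hh Hp). lra. }
    replace (a + INR (S n) * h) with (a + h + INR n * h) by (rewrite S_INR; ring).
    replace (INR (S n) * M ^ 2 * h ^ 3 / 12)
      with (plus (M ^ 2 * h ^ 3 / 12) (INR n * M ^ 2 * h ^ 3 / 12))
      by (rewrite S_INR; unfold plus; simpl; field).
    apply (is_RInt_Chasles (V := R_NormedModule) _ a (a + h)).
    + apply is_RInt_midpoint_jump; [exact Hh | |];
        intros x Hx; cbn [staircase]; rewrite step_eval_cons; simpl fst; simpl snd.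
      * destruct Rle_dec; [lra|].
        rewrite step_eval_before_jumps by (apply Hlater; lra). ring.
      * destruct Rle_dec; [|lra].
        rewrite step_eval_before_jumps by (apply Hlater; lra). ring.
    + eapply is_RInt_ext_open; [nra | | apply (IH (a + h))].
      intros x Hx. cbn [staircase]. rewrite step_eval_cons; simpl fst.
      destruct Rle_dec; [|lra]. simpl snd. now replace (M * a + M * h) with (M * (a + h)) by ring.
Qed.

Lemma staircase_admissible L M n : 0 < L -> M <> 0 -> (0 < n)%nat ->
  step_ok L (staircase (L / INR n) M n 0) /\
  step_right 0 (staircase (L / INR n) M n 0) = M * L.
Proof.
  intros HL HM Hn. apply lt_0_INR in Hn.
  assert (Hh : 0 < L / INR n) by (apply Rdiv_lt_0_compat; lra).
  split; [split|].
  - now apply staircase_NoDup.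
  - apply Forall_forall. intros p Hp.
    destruct (In_staircase _ M n 0 p Hh Hp) as [Hpos ->].
    replace (0 + INR n * (L / INR n)) with L in Hpos by (field; lra).
    split; [exact Hpos|]. apply Rmult_integral_contrapositive_currified; lra.
  - unfold step_right. rewrite staircase_jump_sum. field. lra.
Qed.

Lemma G_staircase alpha beta L M n : 0 < L -> (0 < n)%nat ->
  G alpha beta (fun x => M * x) L 0 (staircase (L / INR n) M n 0)
    = alpha * INR n + beta * M ^ 2 * L ^ 3 / (12 * INR n ^ 2).
Proof.
  intros HL Hn. apply lt_0_INR in Hn.
  pose proof (is_RInt_staircase (L / INR n) M n 0 ltac:(apply Rdiv_lt_0_compat; lra)) as HI.
  rewrite Rmult_0_r in HI. replace (0 + INR n * (L / INR n)) with L in HI by (field; lra).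
  unfold G. rewrite staircase_length, (is_RInt_unique _ _ _ _ HI). field. lra.
Qed.

Lemma staircase_cost_le alpha beta L M t N : 0 < alpha -> 0 < L -> 0 < t ->
  beta * M ^ 2 * t ^ 3 = 6 * alpha -> L / t < N <= L / t + 1 ->
  alpha * N + beta * M ^ 2 * L ^ 3 / (12 * N ^ 2) <= beta * M ^ 2 * t ^ 2 * L / 4 + 3 * alpha / 2.
Proof.
  intros Ha HL Ht Hscale HN.
  set (k := L / t) in HN.
  assert (Hk : 0 < k) by (apply Rdiv_lt_0_compat; lra).
  assert (HL' : L = k * t) by (unfold k; field; lra).
  assert (Halpha : alpha = beta * M ^ 2 * t ^ 3 / 6) by lra.
  assert (Hfid : beta * M ^ 2 * L ^ 3 / (12 * N ^ 2) = alpha * k ^ 3 / (2 * N ^ 2))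
    by (rewrite HL', Halpha; field; lra).
  assert (Hjump : beta * M ^ 2 * t ^ 2 * L / 4 = 3 * alpha * k / 2)
    by (rewrite HL', Halpha; field).
  assert (Hk3 : k ^ 3 / (2 * N ^ 2) <= k / 2).
  { apply Rmult_le_reg_r with (2 * N ^ 2); [nra|].
    replace (k ^ 3 / (2 * N ^ 2) * (2 * N ^ 2)) with (k * k ^ 2) by (field; lra).
    assert (k ^ 2 <= N ^ 2) by nra. nra. }
  rewrite Hfid, Hjump. nra.
Qed.

Lemma exists_pinned_G_le alpha beta L M : 0 < alpha -> 0 < beta -> 0 < L ->
  exists c js, step_ok L js /\ step_left c js = 0 /\ step_right c js = M * L /\
    G alpha beta (fun x => M * x) L c js
      <= / 2 * cbrt (9 * alpha ^ 2 * beta * M ^ 2 / 2) * L + 3 * alpha / 2.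
Proof.
  intros Ha Hb HL. destruct (Req_dec M 0) as [-> | HM].
  - exists 0, []. split; [split; constructor|]. split; [reflexivity|].
    split; [unfold step_right; simpl; ring|].
    replace (9 * alpha ^ 2 * beta * 0 ^ 2 / 2) with 0 by field. rewrite cbrt_0.
    assert (HI : is_RInt (fun x => (step_eval 0 [] x - 0 * x) ^ 2) 0 L
                   ((L - 0) * (0 - 0 * (0 + L) / 2) ^ 2 + 0 ^ 2 * (L - 0) ^ 3 / 12)).
    { eapply is_RInt_ext_open; [lra | | apply is_RInt_affine_sq].
      intros x _. unfold step_eval; simpl. ring. }
    unfold G. rewrite (is_RInt_unique _ _ _ _ HI). simpl. lra.
  - destruct (optimal_spacing alpha beta M Ha Hb HM) as [t [Ht [Hscale ->]]].
    destruct (nfloor_ex (L / t)) as [m Hm]; [apply Rlt_le, Rdiv_lt_0_compat; lra|].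
    exists 0, (staircase (L / INR (S m)) M (S m) 0).
    destruct (staircase_admissible L M (S m) HL HM (Nat.lt_0_succ m)) as [Hok Hright].
    split; [exact Hok | split; [reflexivity | split; [exact Hright|]]].
    rewrite G_staircase by (lia || lra).
    eapply Rle_trans; [apply (staircase_cost_le alpha beta L M t) | right; field]; try lra.
    rewrite S_INR. lra.
Qed.

Lemma real_Glb_Rbar_ge (E : R -> Prop) K : (exists y, E y) -> (forall y, E y -> K <= y) ->
  K <= real (Glb_Rbar E).
Proof.
  intros [y0 Hy0] HK. destruct (Glb_Rbar_correct E) as [Hlb Hglb].
  specialize (Hlb y0 Hy0). specialize (Hglb K HK).
  destruct (Glb_Rbar E); simpl in *; tauto.
Qed.

Lemma real_Glb_Rbar_le (E : R -> Prop) K y : (forall z, E z -> K <= z) -> E y ->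
  real (Glb_Rbar E) <= y.
Proof.
  intros HK Hy. destruct (Glb_Rbar_correct E) as [Hlb Hglb].
  specialize (Hlb y Hy). specialize (Hglb K HK).
  destruct (Glb_Rbar E); simpl in *; tauto.
Qed.

Theorem proposition4p3 (alpha beta L M : R) :
  0 < alpha -> 0 < beta -> 0 < L ->
  / 2 * cbrt (9 * alpha ^ 2 * beta * M ^ 2 / 2) * L - 2 * Rpower 6 (2 / 3) * alpha
    <= mu alpha beta L M /\
  mu alpha beta L M <= mu_star alpha beta L M /\
  mu_star alpha beta L M
    <= / 2 * cbrt (9 * alpha ^ 2 * beta * M ^ 2 / 2) * L + 3 * alpha / 2.
Proof.
  intros Ha Hb HL. unfold mu, mu_star.
  set (B := / 2 * cbrt (9 * alpha ^ 2 * beta * M ^ 2 / 2) * L).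
  set (E := fun y => exists c js, step_ok L js /\ y = G alpha beta (fun x => M * x) L c js).
  set (E_pinned := fun y => exists c js, step_ok L js /\
                     step_left c js = 0 /\ step_right c js = M * L /\
                     y = G alpha beta (fun x => M * x) L c js).
  assert (Hpinned : forall y, E_pinned y -> E y)
    by (intros y (c & js & Hok & _ & _ & ->); now exists c, js).
  assert (Hlower : forall y, E y -> B - alpha <= y)
    by (intros y (c & js & _ & ->); apply G_ge_energy; lra).
  destruct (exists_pinned_G_le alpha beta L M Ha Hb HL) as (c & js & Hok & Hl & Hr & HG).
  assert (Hwitness : E_pinned (G alpha beta (fun x => M * x) L c js)) by now exists c, js.
  assert (H6 : 1 <= Rpower 6 (2 / 3))
    by (rewrite <- (Rpower_O 6) by lra; apply Rle_Rpower; lra).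
  split; [|split].
  - apply (Rle_trans _ (B - alpha)); [nra|].
    apply real_Glb_Rbar_ge; [eexists; apply Hpinned, Hwitness | exact Hlower].
  - apply real_Glb_Rbar_ge; [eexists; exact Hwitness|].
    intros y Hy. apply (real_Glb_Rbar_le _ (B - alpha)); auto.
  - eapply Rle_trans; [apply (real_Glb_Rbar_le _ (B - alpha)) | exact HG]; [|exact Hwitness].
    intros y Hy. now apply Hlower, Hpinned.
Qed.
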